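(* Let $a_0,a_1,\dots$ and $b_0,b_1,\dots$ be distinct complex numbers and $\mathscr L$ a linear functional on the space of rational functions of $t$ whose poles lie in $\{a_j\}\cup\{b_j\}$. For $n\ge0$ let $\mathsf A_n,\mathsf B_n,\mathsf C_n$ be polynomials of degree $n$ such that for every polynomial $p$ of degree $<n$: $\mathscr L\big(\mathsf A_n(t)p(t)/[(t-a_0)\cdots(t-a_n)(t-b_0)\cdots(t-b_{n-1})]\big)=0$, $\mathscr L\big(\mathsf B_n(t)p(t)/[(t-a_0)\cdots(t-a_{n-1})(t-b_0)\cdots(t-b_n)]\big)=0$, $\mathscr L\big(\mathsf C_n(t)p(t)/[(t-a_0)\cdots(t-a_n)(t-b_0)\cdots(t-b_n)]\big)=0$, and assume each of these three orthogonality conditions determines its polynomial uniquely up to a constant factor. Then there are constants $\kappa_1,\kappa_2,\kappa_3$ (possibly zero) such that $$\kappa_1\mathsf A_n(t)=\frac{\mathsf C_n(b_n)\mathsf A_{n+1}(t)-\mathsf A_{n+1}(b_n)\mathsf C_n(t)}{t-b_n},\qquad \kappa_2\mathsf B_n(t)=\frac{\mathsf C_n(a_n)\mathsf B_{n+1}(t)-\mathsf B_{n+1}(a_n)\mathsf C_n(t)}{t-a_n},$$ $$\kappa_3\mathsf C_n(t)=\frac{\mathsf A_{n+1}(a_{n+1})\mathsf C_{n+1}(t)-\mathsf C_{n+1}(a_{n+1})\mathsf A_{n+1}(t)}{t-a_{n+1}},$$ the right-hand sides being polynomials in $t$. *)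

From HB Require Import structures.
From mathcomp Require Import all_boot all_order all_algebra.
From mathcomp Require Import reals complex.
Set Implicit Arguments. Unset Strict Implicit. Unset Printing Implicit Defensive.
Import Order.TTheory GRing.Theory Num.Theory.
Local Open Scope ring_scope.

Definition ratfun (K : fieldType) := {fraction {poly K}}.

Definition poles_in (K : fieldType) (S : K -> Prop) (f : ratfun K) : Prop :=
  exists d : seq K, (forall c, c \in d -> S c) /\
  exists q : {poly K}, f * (tofrac (\prod_(c <- d) ('X - c%:P))) = tofrac q.

Definition linear_on_poles (K : fieldType) (S : K -> Prop) (L : ratfun K -> K) : Prop :=
  (forall f g, poles_in S f -> poles_in S g -> L (f + g) = L f + L g) /\
  (forall (c : K) f, poles_in S f -> L (tofrac (c%:P) * f) = c * L f).

Definition rf (K : fieldType) (p q : {poly K}) : ratfun K := tofrac p / tofrac q.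

Definition nodes (K : fieldType) (x : nat -> K) (m : nat) : {poly K} :=
  \prod_(i < m) ('X - (x i)%:P).

Definition orth (K : fieldType) (L : ratfun K -> K) (n : nat) (den P : {poly K}) : Prop :=
  forall p : {poly K}, (size p <= n)%N -> L (rf (P * p) den) = 0.

Definition orth_unique (K : fieldType) (L : ratfun K -> K) (n : nat) (den P : {poly K}) : Prop :=
  forall Q : {poly K}, (size Q <= n.+1)%N -> orth L n den Q -> exists c : K, Q = c *: P.

From HB Require Import structures.
From mathcomp Require Import all_boot all_order all_algebra.
From mathcomp Require Import reals complex.
Import Order.TTheory GRing.Theory Num.Theory.
Local Open Scope ring_scope.

(* If U and V both satisfy the n orthogonality conditions for the denominator
   D (t - x), then so does Q := U(x) V - V(x) U, which moreover vanishes at x.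
   Cancelling the factor t - x, the quotient Q / (t - x) has degree <= n and
   satisfies the n conditions for D, so uniqueness makes it a multiple of the
   polynomial attached to D.  The three identities are three instances, where
   the conditions for U and V are obtained from theirs by lowering the number
   of conditions or by dropping a factor of the denominator. *)

Section Orthogonality.
Set Implicit Arguments. Unset Strict Implicit.
Variables (K : fieldType) (S : K -> Prop) (L : ratfun K -> K).
Hypothesis linL : linear_on_poles S L.

Definition nodal_denom (D : {poly K}) := exists d : seq K,
  (forall c, c \in d -> S c) /\ D = \prod_(c <- d) ('X - c%:P).

Lemma nodal_denom_neq0 D : nodal_denom D -> D != 0.
Proof. by case=> d [_ ->]; apply/monic_neq0/monic_prod_XsubC. Qed.

Lemma nodal_denom_mulXsubC D x :
  nodal_denom D -> S x -> nodal_denom (D * ('X - x%:P)).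
Proof.
case=> d [Sd ->] Sx; exists (rcons d x); split.
  by move=> c; rewrite mem_rcons inE => /orP[/eqP->|/Sd].
by rewrite -cats1 big_cat big_seq1.
Qed.

Lemma nodal_denom_nodes (a b : nat -> K) m k :
  (forall i, S (a i)) -> (forall i, S (b i)) -> nodal_denom (nodes a m * nodes b k).
Proof.
move=> Sa Sb; exists ([seq a i | i <- iota 0 m] ++ [seq b i | i <- iota 0 k]).
split; first by move=> c; rewrite mem_cat => /orP[] /mapP[i _ ->].
rewrite big_cat /nodes !big_map -(big_mkord xpredT (fun i => 'X - (a i)%:P))
  -(big_mkord xpredT (fun i => 'X - (b i)%:P)).
by rewrite /index_iota !subn0.
Qed.

Lemma poles_in_rf p D : nodal_denom D -> poles_in S (rf p D).
Proof.
move=> nD; have D0 := nodal_denom_neq0 nD; case: nD => d [Sd eD].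
by exists d; split => //; exists p; rewrite -eD /rf mulfVK // tofrac_eq0.
Qed.

Lemma rf_mul2r (p q r : {poly K}) : r != 0 -> rf (p * r) (q * r) = rf p q.
Proof.
move=> r0; have tr0 : tofrac r != 0 by rewrite tofrac_eq0.
by rewrite /rf !tofracM invfM mulrACA mulfV // mulr1.
Qed.

Lemma orth_le n D P : orth L n.+1 D P -> orth L n D P.
Proof. by move=> oP p sp; apply: oP; apply: leqW. Qed.

Lemma orth_mulXsubC n D P x : orth L n.+1 (D * ('X - x%:P)) P -> orth L n D P.
Proof.
move=> oP p sp; rewrite -(@rf_mul2r _ _ ('X - x%:P)) ?polyXsubC_eq0 // -mulrA.
by apply: oP; rewrite (leq_trans (size_polyMleq _ _)) // size_XsubC addn2.
Qed.

Lemma orth_divXsubC n D q x :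
  orth L n (D * ('X - x%:P)) (q * ('X - x%:P)) -> orth L n D q.
Proof.
by move=> oq p sp; rewrite -(@rf_mul2r _ _ ('X - x%:P)) ?polyXsubC_eq0 // mulrAC oq.
Qed.

Lemma orth_lin n D (c1 c2 : K) (U V : {poly K}) : nodal_denom D ->
  orth L n D U -> orth L n D V -> orth L n D (c1 *: U - c2 *: V).
Proof.
case: linL => LD LZ nD oU oV p sp.
have -> : rf ((c1 *: U - c2 *: V) * p) D =
    tofrac c1%:P * rf (U * p) D + tofrac (- c2)%:P * rf (V * p) D.
  by rewrite /rf !mulrA -!tofracM !mul_polyC -mulrDl -tofracD mulrBl
    -!scalerAl scaleNr.
have poles c (W : {poly K}) : poles_in S (tofrac c%:P * rf (W * p) D).
  by rewrite /rf mulrA -tofracM; apply: poles_in_rf.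
rewrite LD ?poles // !LZ; try exact: poles_in_rf.
by rewrite (oU p sp) (oV p sp) !mulr0 addr0.
Qed.

Lemma orth_unique_eliminate n (D T U V : {poly K}) x : nodal_denom D -> S x ->
  orth_unique L n D T -> (size U <= n.+2)%N -> (size V <= n.+2)%N ->
  orth L n (D * ('X - x%:P)) U -> orth L n (D * ('X - x%:P)) V ->
  exists k, U.[x] *: V - V.[x] *: U = k *: T * ('X - x%:P).
Proof.
move=> nD Sx uT sU sV oU oV; set Q := U.[x] *: V - V.[x] *: U.
have /factor_theorem[q eQ] : root Q x by rewrite /root /Q !hornerE mulrC subrr.
have sQ : (size Q <= n.+2)%N.
  by rewrite (leq_trans (size_polyD _ _)) // geq_max size_polyN
    !(leq_trans (size_scale_leq _ _)).
have sq : (size q <= n.+1)%N.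
  have [->|q0] := eqVneq q 0; first by rewrite size_poly0.
  by move: sQ; rewrite eQ size_mul ?polyXsubC_eq0 // size_XsubC addn2.
have oq : orth L n D q.
  apply: (orth_divXsubC (x := x)); rewrite -eQ.
  by apply: orth_lin => //; apply: nodal_denom_mulXsubC.
by have [k ek] := uT q sq oq; exists k; rewrite -ek.
Qed.

End Orthogonality.

Lemma nodesS (K : fieldType) (x : nat -> K) m :
  nodes x m.+1 = nodes x m * ('X - (x m)%:P).
Proof. by rewrite /nodes big_ord_recr. Qed.

Theorem mainTheorem11 (R : realType) (a b : nat -> R[i])
  (L : ratfun R[i] -> R[i]) (A B C : nat -> {poly R[i]}) :
  injective a -> injective b -> (forall i j, a i <> b j) ->
  linear_on_poles (fun c => exists j, c = a j \/ c = b j) L ->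
  (forall n, size (A n) = n.+1) ->
  (forall n, size (B n) = n.+1) ->
  (forall n, size (C n) = n.+1) ->
  (forall n, orth L n (nodes a n.+1 * nodes b n) (A n)) ->
  (forall n, orth L n (nodes a n * nodes b n.+1) (B n)) ->
  (forall n, orth L n (nodes a n.+1 * nodes b n.+1) (C n)) ->
  (forall n, orth_unique L n (nodes a n.+1 * nodes b n) (A n)) ->
  (forall n, orth_unique L n (nodes a n * nodes b n.+1) (B n)) ->
  (forall n, orth_unique L n (nodes a n.+1 * nodes b n.+1) (C n)) ->
  forall n : nat,
    (exists k1 : R[i],
        (C n).[b n] *: A n.+1 - (A n.+1).[b n] *: C n = k1 *: A n * ('X - (b n)%:P)) /\
    (exists k2 : R[i],
        (C n).[a n] *: B n.+1 - (B n.+1).[a n] *: C n = k2 *: B n * ('X - (a n)%:P)) /\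
    (exists k3 : R[i],
        (A n.+1).[a n.+1] *: C n.+1 - (C n.+1).[a n.+1] *: A n.+1
          = k3 *: C n * ('X - (a n.+1)%:P)).
Proof.
move=> _ _ _ linL sA sB sC oA oB oC uA uB uC n.
set S := fun c => exists j, c = a j \/ c = b j.
have Sa j : S (a j) by exists j; left.
have Sb j : S (b j) by exists j; right.
have nD (m k : nat) : nodal_denom S (nodes a m * nodes b k).
  exact: nodal_denom_nodes.
have dA m k : nodes a m.+1 * nodes b k = nodes a m * nodes b k * ('X - (a m)%:P).
  by rewrite nodesS mulrAC.
have dB m k : nodes a m * nodes b k.+1 = nodes a m * nodes b k * ('X - (b k)%:P).
  by rewrite nodesS mulrA.
have eliminate := orth_unique_eliminate linL (nD _ _).
split; [|split].
- apply: eliminate (Sb n) (uA n) _ _ _ _; rewrite ?sA ?sC // -dB //.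
  by apply: orth_mulXsubC (a n.+1) _; rewrite -dA.
- apply: eliminate (Sa n) (uB n) _ _ _ _; rewrite ?sB ?sC // -dA //.
  by apply: orth_mulXsubC (b n.+1) _; rewrite -dB.
- apply: eliminate (Sa n.+1) (uC n) _ _ _ _; rewrite ?sA ?sC // -dA.
    exact: orth_le.
  by apply: orth_mulXsubC (b n.+1) _; rewrite -dB.
Qed.
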